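(* Let $0<a<b<1$ with $a+b=1$, $m\in C^1([0,1])$ non-constant, $c\in C([0,1])$, and assume (H1), (H2) and $m\in S_{\mathcal{N}}$. Then $\liminf_{s\to+\infty}\lambda(s)\ge\lambda^{\mathcal{N}}$.
   Context: Fix an integer $d\ge1$. $\lambda(s)$ denotes the principal eigenvalue of $-\varphi''-\frac{d-1}{r}\varphi'-2s\,m'(r)\varphi'+c(r)\varphi=\lambda\varphi$ on $(0,1)$, $\varphi'(0)=\varphi'(1)=0$; equivalently $\lambda(s)=\min\{\int_0^1 r^{d-1}e^{2sm}(|\varphi'|^2+c\varphi^2)dr:\ \varphi\in H^1((0,1)),\ \int_0^1 r^{d-1}e^{2sm}\varphi^2dr=1\}$. $\lambda^{\mathcal{D}}$ (resp. $\lambda^{\mathcal{N}}$) is the principal eigenvalue of $-\varphi''-\frac{d-1}{r}\varphi'+c\varphi=\lambda\varphi$ on $(a,b)$ with Dirichlet (resp. Neumann) boundary conditions, i.e. the minimum of $\int_a^b r^{d-1}(|\varphi'|^2+c\varphi^2)dr$ over $\varphi\in H^1_0((a,b))$ (resp. $H^1((a,b))$) with $\int_a^b r^{d-1}\varphi^2dr=1$. (H1): $m(r)=m(1-r)$ on $[0,1]$ and $m\equiv0$ on $[a,b]$, where $a+b=1$. (H2): $c>0$ on $[0,1]$ and $c(r)>\lambda^{\mathcal{D}}$ for $r\in[0,a]\cup[b,1]$. Step function $\bar m$: given $\delta\in(0,a)$, constants $0<h<\alpha<\beta<1<\nu$ and $l\in\mathbb{N}$ with $\sum_{i\ge1}(\alpha^{i+l}+\beta^{i+l})=a-\delta$,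 put $Y_0=\delta$, $Y_n=\delta+\sum_{i=1}^n(\alpha^{i+l}+\beta^{i+l})$ and $X_n=Y_n-\beta^{n+l}$ for $n\ge1$; define $\bar m(r)=h^n$ on $[Y_{n-1},X_n]$ and $\bar m(r)=-\nu h^n$ on $[X_n,Y_n]$ for $n\ge1$, and $\bar m(r)=\bar m(1-r)$ for $r\in[b,1-\delta]$. $S_{\mathcal{N}}$: the set of $m\in C^1([0,1])$ such that, for some such $\delta,h,\alpha,\beta,\nu,l$, $m'$ changes sign only finitely many times in $[0,\delta)\cup(1-\delta,1]$ and $m(r)\le\bar m(r)$ for all $r\in[\delta,a]\cup[b,1-\delta]$. *)

From Stdlib Require Import Reals Lra.
From Coquelicot Require Import Coquelicot.
Open Scope R_scope.

Definition isC1 (f df : R -> R) : Prop :=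
  (forall x, is_derive f x (df x)) /\ (forall x, continuous df x).

Definition lam (d : nat) (m c : R -> R) (s : R) : Rbar :=
  Glb_Rbar (fun L => exists phi dphi : R -> R, isC1 phi dphi /\
    RInt (fun r => r ^ (d - 1) * exp (2 * s * m r) * (phi r) ^ 2) 0 1 = 1 /\
    L = RInt (fun r => r ^ (d - 1) * exp (2 * s * m r) *
                       ((dphi r) ^ 2 + c r * (phi r) ^ 2)) 0 1).

Definition lamD (d : nat) (c : R -> R) (a b : R) : Rbar :=
  Glb_Rbar (fun L => exists phi dphi : R -> R, isC1 phi dphi /\
    phi a = 0 /\ phi b = 0 /\
    RInt (fun r => r ^ (d - 1) * (phi r) ^ 2) a b = 1 /\
    L = RInt (fun r => r ^ (d - 1) * ((dphi r) ^ 2 + c r * (phi r) ^ 2)) a b).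

Definition lamN (d : nat) (c : R -> R) (a b : R) : Rbar :=
  Glb_Rbar (fun L => exists phi dphi : R -> R, isC1 phi dphi /\
    RInt (fun r => r ^ (d - 1) * (phi r) ^ 2) a b = 1 /\
    L = RInt (fun r => r ^ (d - 1) * ((dphi r) ^ 2 + c r * (phi r) ^ 2)) a b).

Definition finite_sign_changes (f : R -> R) (u v : R) : Prop :=
  exists (t : nat -> R) (k : nat), t O = u /\ t k = v /\
    (forall i, (i < k)%nat -> t i < t (S i)) /\
    (forall i, (i < k)%nat ->
       (forall x, t i < x < t (S i) -> 0 <= f x) \/
       (forall x, t i < x < t (S i) -> f x <= 0)).

Fixpoint Yseq (delta alpha beta : R) (l : nat) (n : nat) : R :=
  match n with
  | O => delta
  | S k => Yseq delta alpha beta l k + alpha ^ (S k + l) + beta ^ (S k + l)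
  end.

Definition Xseq (delta alpha beta : R) (l : nat) (n : nat) : R :=
  Yseq delta alpha beta l n - beta ^ (n + l).

Definition H1 (m : R -> R) (a b : R) : Prop :=
  (forall r, 0 <= r <= 1 -> m r = m (1 - r)) /\ (forall r, a <= r <= b -> m r = 0).

Definition H2 (d : nat) (c : R -> R) (a b : R) : Prop :=
  (forall r, 0 <= r <= 1 -> 0 < c r) /\
  (forall r, (0 <= r <= a \/ b <= r <= 1) -> Rbar_lt (lamD d c a b) (c r)).

(* m in S_N; m <= mbar is written out interval by interval: on [Y_{n-1},X_n]
   mbar = h^n, on [X_n,Y_n] mbar = -nu h^n, and mbar(r) = mbar(1-r) on [b,1-delta]. *)
Definition in_SN (m dm : R -> R) (a : R) : Prop :=
  exists (delta h alpha beta nu : R) (l : nat),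
    0 < delta < a /\ 0 < h /\ h < alpha /\ alpha < beta /\ beta < 1 /\ 1 < nu /\
    is_series (fun i : nat => alpha ^ (S i + l) + beta ^ (S i + l)) (a - delta) /\
    finite_sign_changes dm 0 delta /\ finite_sign_changes dm (1 - delta) 1 /\
    (forall (k : nat) (r : R),
       Yseq delta alpha beta l k <= r <= Xseq delta alpha beta l (S k) ->
       m r <= h ^ (S k) /\ m (1 - r) <= h ^ (S k)) /\
    (forall (k : nat) (r : R),
       Xseq delta alpha beta l (S k) <= r <= Yseq delta alpha beta l (S k) ->
       m r <= - (nu * h ^ (S k)) /\ m (1 - r) <= - (nu * h ^ (S k))).

(** On [[a,b]] the weight [exp (2 s m)] equals [1], so there the Rayleigh
    energy of any test function dominates [lambda^N] times its mass; on
    [[0,a]] and [[b,1]] the potential satisfies [c > lambda^D >= lambda^N]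
    and the energy dominates [c] times the mass pointwise.  Adding the three
    pieces gives [lambda(s) >= lambda^N] for every [s], uniformly. *)

From Stdlib Require Import Reals Lra.
From Coquelicot Require Import Coquelicot.
Open Scope R_scope.

Lemma continuous_Rmult (f g : R -> R) x :
  continuous f x -> continuous g x -> continuous (fun y => f y * g y) x.
Proof. exact (continuous_mult (K := R_AbsRing) f g x). Qed.

Lemma continuous_Rplus (f g : R -> R) x :
  continuous f x -> continuous g x -> continuous (fun y => f y + g y) x.
Proof. exact (continuous_plus (V := R_NormedModule) f g x). Qed.

Lemma continuous_Rpow (f : R -> R) n x :
  continuous f x -> continuous (fun y => f y ^ n) x.
Proof.
  intros Hf; induction n as [|n IH]; simpl.
  - apply continuous_const.
  - now apply continuous_Rmult.
Qed.

Lemma continuous_pow_id n x : continuous (fun r : R => r ^ n) x.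
Proof. apply continuous_Rpow, continuous_id. Qed.

Lemma isC1_continuous (f df : R -> R) : isC1 f df -> forall x, continuous f x.
Proof.
  intros [Hf _] x.
  apply (ex_derive_continuous (K := R_AbsRing) (V := R_NormedModule)).
  now exists (df x).
Qed.

Lemma ex_RInt_Rcontinuous (f : R -> R) u v :
  (forall x, continuous f x) -> ex_RInt f u v.
Proof. intros Hf; apply (ex_RInt_continuous (V := R_CompleteNormedModule)); auto. Qed.

Lemma RInt_Rscal (f : R -> R) u v k :
  ex_RInt f u v -> RInt (fun x => k * f x) u v = k * RInt f u v.
Proof. exact (RInt_scal (V := R_CompleteNormedModule) f u v k). Qed.

Lemma RInt_Rext (f g : R -> R) u v : u <= v ->
  (forall x, u < x < v -> f x = g x) -> RInt f u v = RInt g u v.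
Proof.
  intros Huv Hfg; apply (RInt_ext (V := R_CompleteNormedModule)).
  rewrite Rmin_left, Rmax_right by lra; exact Hfg.
Qed.

Lemma RInt_Rchasles (f : R -> R) u v w :
  (forall x, continuous f x) -> RInt f u w = RInt f u v + RInt f v w.
Proof.
  intros Hf; symmetry.
  apply (RInt_Chasles (V := R_CompleteNormedModule)); now apply ex_RInt_Rcontinuous.
Qed.

Lemma Glb_Rbar_le_elem (E : R -> Prop) x : E x -> Rbar_le (Glb_Rbar E) x.
Proof. intros Ex; exact (proj1 (Glb_Rbar_correct E) x Ex). Qed.

Lemma Glb_Rbar_ge (E : R -> Prop) (M : Rbar) :
  (forall x, E x -> Rbar_le M x) -> Rbar_le M (Glb_Rbar E).
Proof. intros HM; exact (proj2 (Glb_Rbar_correct E) M HM). Qed.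

Lemma Glb_Rbar_subset (E1 E2 : R -> Prop) :
  (forall x, E2 x -> E1 x) -> Rbar_le (Glb_Rbar E1) (Glb_Rbar E2).
Proof.
  intros H12; apply (is_glb_Rbar_subset E1 E2); auto; apply Glb_Rbar_correct.
Qed.

Definition mass (w phi : R -> R) (u v : R) : R :=
  RInt (fun r => w r * phi r ^ 2) u v.

Definition energy (w c phi dphi : R -> R) (u v : R) : R :=
  RInt (fun r => w r * (dphi r ^ 2 + c r * phi r ^ 2)) u v.

Definition rayleigh_values (w c : R -> R) (u v : R) (L : R) : Prop :=
  exists phi dphi, isC1 phi dphi /\ mass w phi u v = 1 /\ L = energy w c phi dphi u v.

Lemma lam_rayleigh d m c s :
  lam d m c s =
  Glb_Rbar (rayleigh_values (fun r => r ^ (d - 1) * exp (2 * s * m r)) c 0 1).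
Proof. reflexivity. Qed.

Lemma lamN_rayleigh d c a b :
  lamN d c a b = Glb_Rbar (rayleigh_values (fun r => r ^ (d - 1)) c a b).
Proof. reflexivity. Qed.

Lemma mass_weight_ext (w1 w2 phi : R -> R) u v : u <= v ->
  (forall r, u < r < v -> w1 r = w2 r) -> mass w1 phi u v = mass w2 phi u v.
Proof. intros Huv Hw; apply RInt_Rext; auto; intros r Hr; now rewrite Hw. Qed.

Lemma energy_weight_ext (w1 w2 c phi dphi : R -> R) u v : u <= v ->
  (forall r, u < r < v -> w1 r = w2 r) ->
  energy w1 c phi dphi u v = energy w2 c phi dphi u v.
Proof. intros Huv Hw; apply RInt_Rext; auto; intros r Hr; now rewrite Hw. Qed.

Lemma lamN_le_lamD d c a b : Rbar_le (lamN d c a b) (lamD d c a b).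
Proof.
  apply Glb_Rbar_subset.
  intros L (phi & dphi & Hphi & _ & _ & Hmass & HL); now exists phi, dphi.
Qed.

Lemma rayleigh_glb_ge w c u v (M : R) :
  (forall phi dphi, isC1 phi dphi -> M * mass w phi u v <= energy w c phi dphi u v) ->
  Rbar_le M (Glb_Rbar (rayleigh_values w c u v)).
Proof.
  intros HM; apply Glb_Rbar_ge.
  intros L (phi & dphi & Hphi & Hmass & ->); simpl.
  specialize (HM phi dphi Hphi); rewrite Hmass in HM; lra.
Qed.

Section WeightedRayleigh.

Variables (w c : R -> R) (u v : R).
Hypothesis w_continuous : forall x, continuous w x.
Hypothesis c_continuous : forall x, continuous c x.
Hypothesis u_le_v : u <= v.

Variables (phi dphi : R -> R).
Hypothesis phi_C1 : isC1 phi dphi.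

Lemma mass_integrand_continuous x : continuous (fun r => w r * phi r ^ 2) x.
Proof.
  apply continuous_Rmult; auto.
  now apply continuous_Rpow, isC1_continuous with dphi.
Qed.

Lemma energy_integrand_continuous x :
  continuous (fun r => w r * (dphi r ^ 2 + c r * phi r ^ 2)) x.
Proof.
  destruct phi_C1 as [_ Hdphi].
  apply continuous_Rmult, continuous_Rplus; auto using continuous_Rpow.
  now apply continuous_Rmult, continuous_Rpow, isC1_continuous with dphi.
Qed.

Lemma mass_chasles t : mass w phi u v = mass w phi u t + mass w phi t v.
Proof. apply RInt_Rchasles, mass_integrand_continuous. Qed.

Lemma energy_chasles t :
  energy w c phi dphi u v = energy w c phi dphi u t + energy w c phi dphi t v.
Proof. apply RInt_Rchasles, energy_integrand_continuous. Qed.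

Hypothesis w_nonneg : forall r, u <= r <= v -> 0 <= w r.

Lemma mass_le_energy_of_le_c (M : R) :
  (forall r, u <= r <= v -> M <= c r) ->
  M * mass w phi u v <= energy w c phi dphi u v.
Proof.
  intros HMc; unfold mass, energy.
  rewrite <- RInt_Rscal by apply ex_RInt_Rcontinuous, mass_integrand_continuous.
  apply RInt_le; [exact u_le_v | | |].
  - apply ex_RInt_Rcontinuous; intros x.
    apply continuous_Rmult; [apply continuous_const | apply mass_integrand_continuous].
  - apply ex_RInt_Rcontinuous, energy_integrand_continuous.
  - intros r Hr.
    assert (Hw := w_nonneg r ltac:(lra)); assert (HM := HMc r ltac:(lra)).
    pose proof (pow2_ge_0 (dphi r)); pose proof (pow2_ge_0 (phi r)).
    assert (0 <= w r * (c r - M) * phi r ^ 2) by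
      (apply Rmult_le_pos; [apply Rmult_le_pos|]; lra).
    nra.
Qed.

Lemma mass_nonneg : 0 <= mass w phi u v.
Proof.
  apply RInt_ge_0; auto.
  - apply ex_RInt_Rcontinuous, mass_integrand_continuous.
  - intros r Hr; apply Rmult_le_pos; [apply w_nonneg; lra | apply pow2_ge_0].
Qed.

Lemma mass_scal k : mass w (fun r => k * phi r) u v = k ^ 2 * mass w phi u v.
Proof.
  unfold mass; rewrite <- RInt_Rscal by apply ex_RInt_Rcontinuous, mass_integrand_continuous.
  apply RInt_Rext; auto; intros; ring.
Qed.

Lemma energy_scal k :
  energy w c (fun r => k * phi r) (fun r => k * dphi r) u v =
  k ^ 2 * energy w c phi dphi u v.
Proof.
  unfold energy;
    rewrite <- RInt_Rscal by apply ex_RInt_Rcontinuous, energy_integrand_continuous.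
  apply RInt_Rext; auto; intros; ring.
Qed.

(* A test function of zero mass is handled by [energy >= 0]; otherwise
   [phi / sqrt (mass phi)] is admissible in the Rayleigh quotient. *)
Lemma mass_le_energy_of_lt_glb (M : R) :
  (forall r, u <= r <= v -> 0 <= c r) ->
  Rbar_lt M (Glb_Rbar (rayleigh_values w c u v)) ->
  M * mass w phi u v <= energy w c phi dphi u v.
Proof.
  intros Hc HM.
  assert (Henergy : 0 * mass w phi u v <= energy w c phi dphi u v)
    by now apply mass_le_energy_of_le_c.
  destruct (Rle_lt_or_eq_dec _ _ mass_nonneg) as [Hpos | Hzero];
    [| rewrite <- Hzero in *; lra].
  set (k := / sqrt (mass w phi u v)).
  assert (Hk2 : k ^ 2 * mass w phi u v = 1).
  { unfold k; rewrite pow_inv, <- Rsqr_pow2, Rsqr_sqrt by lra; field; lra. }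
  assert (Hglb : Rbar_le (Glb_Rbar (rayleigh_values w c u v))
                   (k ^ 2 * energy w c phi dphi u v)).
  { apply Glb_Rbar_le_elem; exists (fun r => k * phi r), (fun r => k * dphi r).
    split; [| split].
    - destruct phi_C1 as [Hphi Hdphi]; split; intros x.
      + now apply is_derive_scal.
      + apply continuous_Rmult; [apply continuous_const | auto].
    - now rewrite mass_scal.
    - now rewrite energy_scal. }
  assert (HMk : M < k ^ 2 * energy w c phi dphi u v).
  { destruct (Glb_Rbar (rayleigh_values w c u v)); simpl in *; lra. }
  assert (M * (k ^ 2 * mass w phi u v) < k ^ 2 * energy w c phi dphi u v) by (rewrite Hk2; lra).
  assert (0 < k ^ 2) by (unfold k; apply pow_lt, Rinv_0_lt_compat, sqrt_lt_R0; lra).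
  nra.
Qed.

End WeightedRayleigh.

Lemma lt_lamN_le_c_outside d c a b (M : R) :
  H2 d c a b -> Rbar_lt M (lamN d c a b) ->
  forall r, (0 <= r <= a \/ b <= r <= 1) -> M <= c r.
Proof.
  intros [_ HcD] HM r Hr.
  specialize (HcD r Hr); pose proof (lamN_le_lamD d c a b) as HND.
  destruct (lamN d c a b), (lamD d c a b); simpl in *; lra.
Qed.

Theorem lemma3p7 (d : nat) (a b : R) (m dm c : R -> R) :
  (1 <= d)%nat ->
  0 < a -> a < b -> b < 1 -> a + b = 1 ->
  isC1 m dm ->
  (exists x y, 0 <= x <= 1 /\ 0 <= y <= 1 /\ m x <> m y) ->
  (forall x, continuous c x) ->
  H1 m a b -> H2 d c a b -> in_SN m dm a ->
  (* liminf_{s -> +oo} lam(s) >= lamN *)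
  forall M : R, Rbar_lt M (lamN d c a b) ->
    exists S : R, forall s : R, S <= s -> Rbar_le M (lam d m c s).
Proof.
  intros _ Ha Hab Hb _ Hm _ Hc [_ Hm0] HH2 _ M HM.
  assert (Hc_outside := lt_lamN_le_c_outside d c a b M HH2 HM).
  assert (Hc_pos : forall r, a <= r <= b -> 0 <= c r)
    by (intros r Hr; apply Rlt_le, (proj1 HH2); lra).
  exists 0; intros s _; rewrite lam_rayleigh.
  set (w := fun r => r ^ (d - 1) * exp (2 * s * m r)).
  assert (Hw_cont : forall x, continuous w x).
  { intros x; apply continuous_Rmult; [apply continuous_pow_id |].
    apply continuous_exp_comp, continuous_Rmult;
      [apply continuous_const | now apply isC1_continuous with dm]. }
  assert (Hw_pos : forall r, 0 <= r -> 0 <= w r)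
    by (intros r Hr; apply Rmult_le_pos; [apply pow_le | apply Rlt_le, exp_pos]; lra).
  assert (Hw_mid : forall r, a < r < b -> w r = r ^ (d - 1))
    by (intros r Hr; unfold w; rewrite Hm0, Rmult_0_r, exp_0 by lra; ring).
  apply rayleigh_glb_ge; intros phi dphi Hphi.
  rewrite (mass_chasles w 0 1 Hw_cont phi dphi Hphi a),
    (mass_chasles w a 1 Hw_cont phi dphi Hphi b),
    (energy_chasles w c 0 1 Hw_cont Hc phi dphi Hphi a),
    (energy_chasles w c a 1 Hw_cont Hc phi dphi Hphi b).
  assert (Hleft : M * mass w phi 0 a <= energy w c phi dphi 0 a).
  { apply mass_le_energy_of_le_c; auto; [lra |].
    intros r Hr; apply Hw_pos; lra. }
  assert (Hright : M * mass w phi b 1 <= energy w c phi dphi b 1).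
  { apply mass_le_energy_of_le_c; auto; [lra |].
    intros r Hr; apply Hw_pos; lra. }
  assert (Hmiddle : M * mass w phi a b <= energy w c phi dphi a b).
  { rewrite (mass_weight_ext w (fun r => r ^ (d - 1))),
      (energy_weight_ext w (fun r => r ^ (d - 1))) by (exact Hw_mid || lra).
    rewrite lamN_rayleigh in HM.
    apply mass_le_energy_of_lt_glb; auto using continuous_pow_id; [lra |].
    intros r Hr; apply pow_le; lra. }
  lra.
Qed.
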